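(* UniGCNII is a special case of the extended AllSet framework. That is, there exist functions $f_{\mathcal{V}\to\mathcal{E}}$ and $f_{\mathcal{E}\to\mathcal{V}}$, each permutation invariant with respect to its first (set-valued) argument, such that the UniGCNII updates can be written, for every hyperedge $e$, every node $v$ and every step $t$, as $$\bm z_e^{(t+1)} = f_{\mathcal{V}\to\mathcal{E}}\big(\{\bm x_u^{(t)}\}_{u\in e};\ \bm z_e^{(t)}\big),\qquad \bm x_v^{(t+1)} = f_{\mathcal{E}\to\mathcal{V}}\big(\{\bm z_e^{(t+1)}\}_{e\in\mathcal{E}_v};\ \{\bm x_v^{(k)}\}_{k=0}^{t}\big).$$
   Context: A hypergraph is $\mathcal{G}=(\mathcal{V},\mathcal{E})$ with each hyperedge $e\in\mathcal{E}$ a subset of the node set $\mathcal{V}$. For $v\in\mathcal{V}$, $\mathcal{E}_v=\{e\in\mathcal{E}: v\in e\}$ and $d_v=|\mathcal{E}_v|$. Nodes and hyperedges carry vector representations $\bm x_v^{(t)}$, $\bm z_e^{(t)}$ at propagation step $t$, with $\bm x_v^{(0)}$ the initial node features. UniGCNII is the propagation scheme in which, at each step, the hyperedge representation is the mean of its nodes' representations, $\bm z_e^{(t+1)}=\frac{1}{|e|}\sum_{u\in e}\bm x_u^{(t)}$, and the node update is $$\hat{\bm x}_v^{(t)}=\frac{1}{\sqrt{d_v}}\sum_{e\in\mathcal{E}_v}\frac{\bm z_e^{(t+1)}}{\sqrt{d_e}},\qquad \bm x_v^{(t+1)}=\big((1-\beta)\bm I+\beta\bm W^{(t)}\big)\big((1-\alpha)\hat{\bm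 x}_v^{(t)}+\alpha\bm x_v^{(0)}\big),$$ where $d_e=\frac{1}{|e|}\sum_{i\in e}d_i$, $\alpha,\beta$ are scalar hyperparameters, $\bm I$ is the identity matrix and $\bm W^{(t)}$ is a learnable weight matrix.
   Formalization: Each node and hyperedge representation passed to or returned by $f_{\mathcal{V}\to\mathcal{E}}$ and $f_{\mathcal{E}\to\mathcal{V}}$ is paired with its degree, $(\bm x_u^{(t)}, d_u)$ and $(\bm z_e^{(t)}, d_e)$, instead of being a plain vector. The statement above fails without it. *)

From HB Require Import structures.
From mathcomp Require Import all_boot all_order all_algebra.
Set Implicit Arguments. Unset Strict Implicit. Unset Printing Implicit Defensive.
Import Order.TTheory GRing.Theory Num.Theory.
Local Open Scope ring_scope.

Definition edges_at (V : finType) (Es : {set {set V}}) (v : V) : {set {set V}} :=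
  [set e in Es | v \in e].

Definition ndeg (R : rcfType) (V : finType) (Es : {set {set V}}) (v : V) : R :=
  (#|edges_at Es v|)%:R.

Definition edeg (R : rcfType) (V : finType) (Es : {set {set V}}) (e : {set V}) : R :=
  (#|e|%:R)^-1 * \sum_(i in e) ndeg R Es i.

(* Permutation invariance in the first (multiset-valued, here a sequence
   considered up to permutation) argument. *)
Definition perm_invariant (A B C : eqType) (f : seq A -> B -> C) : Prop :=
  forall (s1 s2 : seq A) (y : B), perm_eq s1 s2 -> f s1 y = f s2 y.

Definition is_UniGCNII (R : rcfType) (d : nat) (alpha beta : R)
    (W : nat -> 'M[R]_d) (V : finType) (Es : {set {set V}})
    (X : nat -> V -> 'cV[R]_d) (Z : nat -> {set V} -> 'cV[R]_d) : Prop :=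
  forall t : nat,
    (forall e, e \in Es ->
       Z t.+1 e = (#|e|%:R)^-1 *: \sum_(u in e) X t u) /\
    (forall v : V,
       X t.+1 v =
         ((1 - beta)%:M + beta *: W t) *m
           ((1 - alpha) *:
              ((Num.sqrt (ndeg R Es v))^-1 *:
                 \sum_(e in edges_at Es v) (Num.sqrt (edeg R Es e))^-1 *: Z t.+1 e)
            + alpha *: X 0%N v)).

From HB Require Import structures.
From mathcomp Require Import all_boot all_order all_algebra.
Set Implicit Arguments. Unset Strict Implicit. Unset Printing Implicit Defensive.
Import Order.TTheory GRing.Theory Num.Theory.
Local Open Scope ring_scope.

(* Both UniGCNII updates only read sums over the incident multisets, which
   are invariant under reordering.  Each representation is paired with its
   degree, so the hyperedge update is a mean, and the node update reads d_v,
   x_v^(0) and the step t off the history [(x_v^(0), d_v); ...; (x_v^(t), d_v)]. *)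

Section Mean.
Variables (R : fieldType) (V : lmodType R).

Definition mean (s : seq V) : V := ((size s)%:R)^-1 *: \sum_(x <- s) x.

Lemma perm_mean (s1 s2 : seq V) : perm_eq s1 s2 -> mean s1 = mean s2.
Proof. by move=> eq_s; rewrite /mean (perm_big _ eq_s) (perm_size eq_s). Qed.

Lemma mean_enum (T : finType) (A : {pred T}) (F : T -> V) :
  mean [seq F x | x <- enum A] = (#|A|%:R)^-1 *: \sum_(x in A) F x.
Proof. by rewrite /mean size_map -cardE big_map big_enum. Qed.

End Mean.

Section UniGCNIIAggregators.
Variables (R : rcfType) (d : nat) (alpha beta : R) (W : nat -> 'M[R]_d).

Definition unigcnii_edge_aggr (s : seq ('cV[R]_d * R)) (z : 'cV[R]_d * R) :
    'cV[R]_d * R :=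
  (mean (map fst s), z.2).

Definition unigcnii_node_aggr (s h : seq ('cV[R]_d * R)) : 'cV[R]_d * R :=
  let: (x0, dv) := head (0, 0) h in
  (((1 - beta)%:M + beta *: W (size h).-1) *m
     ((1 - alpha) *: ((Num.sqrt dv)^-1 *: \sum_(p <- s) (Num.sqrt p.2)^-1 *: p.1)
      + alpha *: x0), dv).

Lemma perm_invariant_unigcnii_edge_aggr : perm_invariant unigcnii_edge_aggr.
Proof.
by move=> s1 s2 z eq_s; rewrite /unigcnii_edge_aggr (perm_mean (perm_map _ eq_s)).
Qed.

Lemma perm_invariant_unigcnii_node_aggr : perm_invariant unigcnii_node_aggr.
Proof. by move=> s1 s2 h eq_s; rewrite /unigcnii_node_aggr (perm_big _ eq_s). Qed.

Lemma unigcnii_edge_aggrE (T : finType) (A : {pred T}) (X : T -> 'cV[R]_d)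
    (dx : T -> R) (z : 'cV[R]_d * R) :
  unigcnii_edge_aggr [seq (X u, dx u) | u <- enum A] z
    = ((#|A|%:R)^-1 *: \sum_(u in A) X u, z.2).
Proof. by rewrite /unigcnii_edge_aggr -map_comp mean_enum. Qed.

Lemma unigcnii_node_aggrE (T : finType) (A : {pred T}) (Z : T -> 'cV[R]_d)
    (dz : T -> R) (X : nat -> 'cV[R]_d) (dv : R) (t : nat) :
  unigcnii_node_aggr [seq (Z e, dz e) | e <- enum A] [seq (X k, dv) | k <- iota 0 t.+1]
    = (((1 - beta)%:M + beta *: W t) *m
         ((1 - alpha) *: ((Num.sqrt dv)^-1 *: \sum_(e in A) (Num.sqrt (dz e))^-1 *: Z e)
          + alpha *: X 0%N), dv).
Proof. by rewrite /unigcnii_node_aggr size_map size_iota big_map big_enum. Qed.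

End UniGCNIIAggregators.

Theorem proposition1 (R : rcfType) (d : nat) (alpha beta : R)
    (W : nat -> 'M[R]_d) :
  exists fVE : seq ('cV[R]_d * R) -> 'cV[R]_d * R -> 'cV[R]_d * R,
  exists fEV : seq ('cV[R]_d * R) -> seq ('cV[R]_d * R) -> 'cV[R]_d * R,
    perm_invariant fVE /\ perm_invariant fEV /\
    forall (V : finType) (Es : {set {set V}})
           (X : nat -> V -> 'cV[R]_d) (Z : nat -> {set V} -> 'cV[R]_d),
      is_UniGCNII alpha beta W Es X Z ->
      forall t : nat,
        (forall e, e \in Es ->
           (Z t.+1 e, edeg R Es e) =
             fVE [seq (X t u, ndeg R Es u) | u <- enum e] (Z t e, edeg R Es e)) /\
        (forall v : V,
           (X t.+1 v, ndeg R Es v) =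
             fEV [seq (Z t.+1 e, edeg R Es e) | e <- enum (edges_at Es v)]
                 [seq (X k v, ndeg R Es v) | k <- iota 0 t.+1]).
Proof.
exists (@unigcnii_edge_aggr R d), (unigcnii_node_aggr alpha beta W).
split; [exact: perm_invariant_unigcnii_edge_aggr|].
split; [exact: perm_invariant_unigcnii_node_aggr|].
move=> V Es X Z uni t; have [edge_step node_step] := uni t.
split=> [e Ee | v].
- by rewrite unigcnii_edge_aggrE edge_step.
- by rewrite unigcnii_node_aggrE node_step.
Qed.
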